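(* $\mathbf{EQP}=\mathbf{EBQP^*}$.
   Context: A quantum Turing machine (QTM) $\mathcal{M}=(\Sigma,Q,\delta)$ consists of: - a finite alphabet $\Sigma$ containing a blank $\#$ and containing $\{0,1\}$; - a finite set $Q$ of states with an initial state $q_0$ and a final state $q_f\neq q_0$; - a quantum transition function $\delta: Q\times\Sigma\to\tilde{\mathbf{C}}^{\Sigma\times Q\times D}$, where $D=\{L,R\}$ or $\{L,N,R\}$ and $\tilde{\mathbf{C}}$ is the set of computable complex numbers. The machine has a two-way infinite tape indexed by $\mathbf{Z}$ and a single head. $\delta$ induces a time-evolution operator on finite complex linear combinations of configurations, which must be unitary. Observing a superposition $\sum_i\alpha_i c_i$ yields configuration $c_i$ with probability $|\alpha_i|^2$ and collapses the state to $c_i$. The designated output cell is always, when read, in a state $\alpha|1\rangle+\beta|0\rangle$ with $|\alpha|^2+|\beta|^2=1$. A modified bulk quantum Turing machine (MBQTM) has the same data and unitarity requirement, but its readout is an $(\epsilon,\theta)$-measurement. On a cell in state $\alpha|1\rangle+\beta|0\rangle$ it returns a value within $\theta$ of $|\alpha|^2-|\beta|^2$ with error probability less than $\epsilon$. If $\alpha=0$ or $\beta=0$ the error probability is exactly zero. The measurement disturbs the state, cannot be repeated, and no partial observation is allowed. $\mathbf{EQP}$ is the class of languages $L$ for which there exist a QTM and a polynomial $p$ such that, for every input $x$, observing a certain tape cell after $p(|x|)$ steps gives $1$ with probability $1$ if $x\in L$ and $0$ with probability $1$ otherwise. $\mathbf{EBQP^*}$ is the class of languages $L$ for which there exist an MBQTM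 and a polynomial $p$ such that, for every input $x$, an $(\epsilon,\theta)$-measurement of a certain tape cell after $p(|x|)$ steps gives a value greater than $1-\theta$ with probability $1$ if $x\in L$, and a value less than $-1+\theta$ with probability $1$ otherwise. *)

From HB Require Import structures.
From mathcomp Require Import all_boot all_order all_algebra.
From mathcomp Require Import finmap.
From mathcomp Require Import boolp classical_sets reals ereal.
From mathcomp Require Import measure lebesgue_measure probability.
From mathcomp.real_closed Require Import complex.

Set Implicit Arguments.
Unset Strict Implicit.
Unset Printing Implicit Defensive.

Import Order.TTheory GRing.Theory Num.Theory.

Inductive recfun : Type :=
| RZero : recfun
| RSucc : recfun
| RProj : nat -> recfun
| RComp : recfun -> seq recfun -> recfun
| RPrec : recfun -> recfun -> recfun
| RMu   : recfun -> recfun.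

Inductive reval : recfun -> seq nat -> nat -> Prop :=
| reZero v : reval RZero v 0
| reSucc x v : reval RSucc (x :: v) x.+1
| reProj i v : i < size v -> reval (RProj i) v (nth 0 v i)
| reComp f gs v ys y :
    revals gs v ys -> reval f ys y -> reval (RComp f gs) v y
| rePrec0 f g v y : reval f v y -> reval (RPrec f g) (0 :: v) y
| rePrecS f g n v r y :
    reval (RPrec f g) (n :: v) r -> reval g (n :: r :: v) y ->
    reval (RPrec f g) (n.+1 :: v) y
| reMu f v n :
    reval f (n :: v) 0 -> (forall m, m < n -> exists k, reval f (m :: v) k.+1) ->
    reval (RMu f) v n
with revals : seq recfun -> seq nat -> seq nat -> Prop :=
| resNil v : revals [::] v [::]
| resCons g gs v y ys :
    reval g v y -> revals gs v ys -> revals (g :: gs) v (y :: ys).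

Definition computable_nat_fun (f : nat -> nat) : Prop :=
  exists e : recfun, forall n, reval e [:: n] (f n).

Local Open Scope ring_scope.

Section Computable.
Variable R : realType.

Definition computable_real (r : R) : Prop :=
  exists a b c : nat -> nat,
    [/\ computable_nat_fun a, computable_nat_fun b, computable_nat_fun c &
        forall n, `| r - ((a n)%:R - (b n)%:R) / (c n).+1%:R | <= (2%:R ^+ n)^-1].

Definition computable_complex (z : R[i]) : Prop :=
  computable_real (complex.Re z) /\ computable_real (complex.Im z).
End Computable.

(* head moves; D = {L, N, R} (a machine with D = {L, R} is one that gives   *)
(* amplitude 0 to N)                                                         *)
Inductive dir := DL | DN | DR.
Definition dirs : seq dir := [:: DL; DN; DR].
Definition dshift (d : dir) : int :=
  match d with DL => -1 | DN => 0 | DR => 1 end.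

Section QTM.
Variable R : realType.
Local Notation C := R[i].

Record qtm := QTM {
  Sig : finType;
  blank : Sig; sym0 : Sig; sym1 : Sig;
  Sig_distinct : uniq [:: blank; sym0; sym1];
  St : finType;
  q_init : St; q_fin : St;
  q_init_fin : q_init != q_fin;
  (* delta q s s' q' d = amplitude of (write s', go to state q', move d)
     when in state q reading s *)
  delta : St -> Sig -> Sig -> St -> dir -> C;
  delta_computable : forall q s s' q' d, computable_complex (delta q s s' q' d)
}.

Variable M : qtm.

Definition tape := {fsfun int -> Sig M with blank M}.

Definition config := (St M * int * tape)%type.
Definition cstate (c : config) : St M := c.1.1.
Definition chead (c : config) : int := c.1.2.
Definition ctape (c : config) : tape := c.2.

(* finite complex linear combinations of configurations, as formal sums *)
Definition combo := seq (config * C).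

Definition amp (L : combo) (c : config) : C := \sum_(e <- L | e.1 == c) e.2.
Definition supp (L : combo) : seq config := undup [seq e.1 | e <- L].

Definition moves : seq (Sig M * St M * dir) :=
  [seq (sq.1, sq.2, d) | sq <- [seq (s, q) | s <- enum (Sig M), q <- enum (St M)],
                          d <- dirs].

Definition succ_conf (c : config) (m : Sig M * St M * dir) : config :=
  (m.1.2, chead c + dshift m.2, [fsfun ctape c with chead c |-> m.1.1]).

Definition stepU (L : combo) : combo :=
  flatten [seq [seq (succ_conf e.1 m,
                     e.2 * delta (cstate e.1) (ctape e.1 (chead e.1)) m.1.1 m.1.2 m.2)
               | m <- moves] | e <- L].

Definition basis (c : config) : combo := [:: (c, 1)].

Definition Uent (c' c : config) : C := amp (stepU (basis c)) c'.

Definition inner (L L' : combo) : C :=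
  \sum_(c <- undup [seq e.1 | e <- L ++ L']) Num.conj (amp L c) * amp L' c.

(* all configurations b with possibly <c|U|b> != 0 *)
Definition preds (c : config) : seq config :=
  [seq (m.1.2, chead c - dshift m.2, [fsfun ctape c with chead c - dshift m.2 |-> m.1.1])
  | m <- moves].

(* U is unitary: U^* U = I and U U^* = I (entrywise; all sums are finite) *)
Definition unitary_qtm : Prop :=
  (forall c c', inner (stepU (basis c)) (stepU (basis c')) = (c == c')%:R) /\
  (forall c c', \sum_(b <- undup (preds c)) Uent c b * Num.conj (Uent c' b)
                = (c == c')%:R).

Definition init_tape (x : seq bool) : tape :=
  foldr (fun i (t : tape) => [fsfun t with (i%:Z) |-> (if nth false x i then sym1 M else sym0 M)])
        [fsfun for fun _ : int => blank M] (iota 0 (size x)).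

Definition init_combo (x : seq bool) : combo :=
  basis (q_init M, 0%:Z, init_tape x).

Definition run (t : nat) (x : seq bool) : combo := iter t stepU (init_combo x).

Definition sqnorm (z : C) : R := complex.Re z ^+ 2 + complex.Im z ^+ 2.

Definition prob_cell (L : combo) (k : int) (s : Sig M) : R :=
  \sum_(c <- supp L | ctape c k == s) sqnorm (amp L c).

End QTM.

Definition peval (p : seq nat) (n : nat) : nat :=
  \sum_(i < size p) nth 0 p i * n ^ i.

Local Open Scope classical_set_scope.
Section Classes.
Variable R : realType.

Definition EQP (Lang : seq bool -> Prop) : Prop :=
  exists (M : qtm R) (k : int) (p : seq nat),
    unitary_qtm M /\
    forall x : seq bool,
      (Lang x -> prob_cell (run M (peval p (size x)) x) k (sym1 M) = 1) /\
      (~ Lang x -> prob_cell (run M (peval p (size x)) x) k (sym0 M) = 1).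

(* An (eps,theta)-measurement: for a cell in state a|1> + b|0> (with
   p1 = |a|^2, p0 = |b|^2, p1 + p0 = 1) it returns a real value distributed
   according to mu p1 p0; an error is a value not within theta of p1 - p0;
   the error probability is < eps, and exactly 0 when a = 0 or b = 0. *)
Definition err_set (theta v : R) : set R := [set y : R | theta <= `|y - v|].

Definition eps_theta_measurement (eps theta : R)
    (mu : R -> R -> probability R R) : Prop :=
  forall p1 p0 : R, 0 <= p1 -> 0 <= p0 -> p1 + p0 = 1 ->
    (mu p1 p0 (err_set theta (p1 - p0)) < eps%:E)%E /\
    (p1 = 0 \/ p0 = 0 -> mu p1 p0 (err_set theta (p1 - p0)) = 0%E).

Definition EBQPstar (eps theta : R) (Lang : seq bool -> Prop) : Prop :=
  exists (M : qtm R) (k : int) (p : seq nat),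
    unitary_qtm M /\
    forall x : seq bool,
      let L := run M (peval p (size x)) x in
      let p1 := prob_cell L k (sym1 M) in
      let p0 := prob_cell L k (sym0 M) in
      (* the output cell is in a state a|1> + b|0>, |a|^2 + |b|^2 = 1 *)
      p1 + p0 = 1 /\
      forall mu : R -> R -> probability R R,
        eps_theta_measurement eps theta mu ->
        (Lang x -> mu p1 p0 [set y : R | 1 - theta < y] = 1%E) /\
        (~ Lang x -> mu p1 p0 [set y : R | y < -1 + theta] = 1%E).
End Classes.

(* Unitarity makes the time evolution an isometry, so every superposition
   reached from a basis configuration has norm 1 and the probabilities p1, p0
   of reading 1, resp. 0, in the output cell satisfy p1 + p0 <= 1.  Hence an
   EQP machine puts the output cell exactly in |1> or |0>, where an
   (eps,theta)-measurement never errs and lands within theta of +1, resp. -1.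
   Conversely, the EBQP* condition has to hold for every admissible
   measurement, in particular for the deterministic one that reports
   p1 - p0 when it is +1 and otherwise a value within theta of it but at most
   1 - theta (and symmetrically for -1).  So the answer is read with
   certainty, and the same machine witnesses EQP. *)

From Pilot Require Import Defs.
From HB Require Import structures.
From mathcomp Require Import all_boot all_order all_algebra.
From mathcomp Require Import reals.
From mathcomp Require Import finmap ereal boolp classical_sets.
From mathcomp Require Import measure lebesgue_measure probability.
From mathcomp.real_closed Require Import complex.
From mathcomp Require Import ring lra.

Set Implicit Arguments.
Unset Strict Implicit.
Unset Printing Implicit Defensive.

Import Order.TTheory GRing.Theory Num.Theory.
Local Open Scope ring_scope.

Section Superpositions.
Variables (R : realType) (M : qtm R).
Local Notation C := R[i].
Local Notation config := (config M).
Local Notation combo := (combo M).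
Local Notation basis := Defs.basis.

Definition scale (a : C) (L : combo) : combo := [seq (e.1, a * e.2) | e <- L].

Definition lin_ext (f : config -> combo) (L : combo) : combo :=
  flatten [seq scale e.2 (f e.1) | e <- L].

Lemma lin_ext_cons (f : config -> combo) e (L : combo) :
  lin_ext f (e :: L) = scale e.2 (f e.1) ++ lin_ext f L.
Proof. by []. Qed.

Lemma stepU_lin_ext : @stepU R M =1 lin_ext (fun c => stepU (basis c)).
Proof.
move=> L; congr flatten; apply: eq_map => e.
by rewrite /scale /stepU /= cats0 -map_comp; apply: eq_map => m /=; rewrite mul1r.
Qed.

Lemma inner_expand (L L' : combo) : inner L L' =
  \sum_(e <- L) \sum_(e' <- L') Num.conj e.2 * e'.2 * (e.1 == e'.1)%:R.
Proof.
rewrite /inner; set s := undup _.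
transitivity (\sum_(d <- s) \sum_(e <- L) \sum_(e' <- L')
                Num.conj e.2 * e'.2 * ((e.1 == d) && (e'.1 == d))%:R).
  apply: eq_bigr => d _; rewrite /amp rmorph_sum mulr_suml big_mkcond.
  apply: eq_bigr => e _ /=; case: (e.1 == d) => /=.
    rewrite mulr_sumr big_mkcond; apply: eq_bigr => e' _ /=.
    by case: (e'.1 == d); rewrite ?mulr1 ?mulr0.
  by rewrite big1 // => e' _; rewrite mulr0.
rewrite exchange_big; apply: eq_big_seq => e eL; rewrite exchange_big.
apply: eq_bigr => e' _; rewrite -mulr_sumr; congr (_ * _).
have e_s : e.1 \in s by rewrite mem_undup map_cat mem_cat map_f.
rewrite (bigD1_seq e.1) ?undup_uniq //= eqxx eq_sym big1 ?addr0 // => c.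
by rewrite eq_sym => /negbTE ->.
Qed.

Lemma inner_cat_l (L1 L2 L' : combo) :
  inner (L1 ++ L2) L' = inner L1 L' + inner L2 L'.
Proof. by rewrite !inner_expand big_cat. Qed.

Lemma inner_cat_r (L L1 L2 : combo) :
  inner L (L1 ++ L2) = inner L L1 + inner L L2.
Proof.
by rewrite !inner_expand -big_split; apply: eq_bigr => e _; rewrite big_cat.
Qed.

Lemma inner_scale_l a (L L' : combo) :
  inner (scale a L) L' = Num.conj a * inner L L'.
Proof.
rewrite !inner_expand big_map mulr_sumr; apply: eq_bigr => e _.
by rewrite mulr_sumr; apply: eq_bigr => e' _; rewrite rmorphM !mulrA.
Qed.

Lemma inner_scale_r a (L L' : combo) : inner L (scale a L') = a * inner L L'.
Proof.
rewrite !inner_expand mulr_sumr; apply: eq_bigr => e _.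
by rewrite big_map mulr_sumr; apply: eq_bigr => e' _; rewrite mulrCA !mulrA.
Qed.

Lemma inner_nil_l (L : combo) : inner [::] L = 0.
Proof. by rewrite inner_expand big_nil. Qed.

Lemma inner_nil_r (L : combo) : inner L [::] = 0.
Proof. by rewrite inner_expand big1 // => e _; rewrite big_nil. Qed.

Lemma inner_cons_l e (L L' : combo) :
  inner (e :: L) L' = Num.conj e.2 * inner (basis e.1) L' + inner L L'.
Proof.
rewrite !inner_expand big_cons big_cons big_nil addr0 mulr_sumr.
by congr (_ + _); apply: eq_bigr => e' _; rewrite rmorph1 mul1r mulrA.
Qed.

Lemma inner_cons_r e (L L' : combo) :
  inner L (e :: L') = e.2 * inner L (basis e.1) + inner L L'.
Proof.
rewrite !inner_expand mulr_sumr -big_split; apply: eq_bigr => e' _ /=.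
by rewrite !big_cons big_nil addr0 mulr1 mulrCA mulrA.
Qed.

Lemma inner_basis (c c' : config) : inner (basis c) (basis c') = (c == c')%:R.
Proof. by rewrite inner_expand !big_cons !big_nil !addr0 rmorph1 !mul1r. Qed.

Lemma inner_lin_ext (f : config -> combo) :
  (forall c c', inner (f c) (f c') = (c == c')%:R) ->
  forall L L', inner (lin_ext f L) (lin_ext f L') = inner L L'.
Proof.
move=> f_iso.
have f_basis c L' : inner (f c) (lin_ext f L') = inner (basis c) L'.
  elim: L' => [|e' L' IH]; first by rewrite !inner_nil_r.
  rewrite lin_ext_cons inner_cat_r inner_scale_r IH f_iso -inner_basis.
  by rewrite inner_cons_r.
elim=> [|e L IH] L'; first by rewrite !inner_nil_l.
by rewrite lin_ext_cons inner_cat_l inner_scale_l IH f_basis inner_cons_l.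
Qed.

Lemma mul_conjC_sqnorm (z : C) : Num.conj z * z = (sqnorm z)%:C%C.
Proof.
case: z => a b; apply/eqP; rewrite eq_complex /sqnorm /=.
by apply/andP; split; apply/eqP; ring.
Qed.

Lemma sqnorm_ge0 (z : C) : 0 <= sqnorm z.
Proof. by rewrite /sqnorm addr_ge0 // sqr_ge0. Qed.

Lemma inner_self (L : combo) :
  inner L L = (\sum_(c <- supp L) sqnorm (amp L c))%:C%C.
Proof.
rewrite /inner map_cat undup_cat (@eq_in_filter _ _ pred0) ?filter_pred0; last first.
  by move=> c; rewrite mem_undup => ->.
by rewrite rmorph_sum; apply: eq_bigr => c _; exact: mul_conjC_sqnorm.
Qed.

Lemma prob_cell_ge0 (L : combo) k s : 0 <= prob_cell L k s.
Proof. by apply: sumr_ge0 => c _; exact: sqnorm_ge0. Qed.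

Lemma prob_cell_add_le (L : combo) k s s' : s != s' ->
  prob_cell L k s + prob_cell L k s' <= \sum_(c <- supp L) sqnorm (amp L c).
Proof.
move=> s_s'; rewrite /prob_cell !(big_mkcond (fun c => _ == _)) -big_split /=.
apply: ler_sum => c _; case: eqP => [->|_]; first by rewrite (negbTE s_s') addr0.
by rewrite add0r; case: ifP; rewrite ?sqnorm_ge0.
Qed.

End Superpositions.

Section Isometry.
Variables (R : realType) (M : qtm R).
Local Notation config := (config M).
Local Notation combo := (combo M).
Local Notation basis := Defs.basis.

Hypothesis stepU_basis_orthonormal :
  forall c c' : config, inner (stepU (basis c)) (stepU (basis c')) = (c == c')%:R.

Lemma inner_stepU (L L' : combo) : inner (stepU L) (stepU L') = inner L L'.
Proof. by rewrite !stepU_lin_ext inner_lin_ext. Qed.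

Lemma sum_sqnorm_run t x :
  \sum_(c <- supp (run M t x)) sqnorm (amp (run M t x) c) = 1.
Proof.
have inner_run : inner (run M t x) (run M t x) = 1.
  by elim: t => [|t IH]; rewrite ?inner_basis ?eqxx // /run iterS inner_stepU.
by move: inner_run; rewrite inner_self => /(congr1 (@complex.Re R)).
Qed.

Lemma prob_cell_run_le1 t x k :
  prob_cell (run M t x) k (sym1 M) + prob_cell (run M t x) k (sym0 M) <= 1.
Proof.
rewrite -(sum_sqnorm_run t x) prob_cell_add_le //.
by have := Sig_distinct M; rewrite /= !inE => /and3P[_ + _]; rewrite eq_sym.
Qed.

End Isometry.

Local Open Scope classical_set_scope.

Section Measurements.
Variable R : realType.
Implicit Types (eps theta v y : R) (S : set R).

Lemma measurable_err_set theta v : measurable (err_set theta v).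
Proof.
have -> : err_set theta v = ~` `](v - theta), (v + theta)[.
  apply/seteqP; split=> y /=;
    by rewrite in_itv /= -ltr_distl /err_set /= leNgt => /negP.
by apply: measurableC; exact: measurable_itv.
Qed.

Lemma measurable_gt v : measurable [set y : R | v < y].
Proof.
have -> : [set y : R | v < y] = `]v, +oo[.
  by apply/seteqP; split=> y; rewrite /= in_itv /= andbT.
exact: measurable_itv.
Qed.

Lemma measurable_lt v : measurable [set y : R | y < v].
Proof.
have -> : [set y : R | y < v] = `]-oo, v[.
  by apply/seteqP; split=> y; rewrite /= in_itv.
exact: measurable_itv.
Qed.

Lemma probability_eq1_of_err0 (P : probability R R) theta v S : measurable S ->
  ~` S `<=` err_set theta v -> P (err_set theta v) = 0%E -> P S = 1%E.
Proof.
move=> mS S_err err0.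
have PSC0 : P (~` S) = 0%E.
  apply: subset_measure0 S_err err0; first exact: measurableC.
  exact: measurable_err_set.
by rewrite -[S]setCK probability_setC ?PSC0 ?sube0 //; exact: measurableC.
Qed.

Lemma eps_theta_measurement_exact1 eps theta mu :
  eps_theta_measurement eps theta mu -> mu 1 0 [set y | 1 - theta < y] = 1%E.
Proof.
move=> mu_ok; apply: (@probability_eq1_of_err0 _ theta (1 - 0)).
- exact: measurable_gt.
- move=> y /negP; rewrite -leNgt /err_set /= subr0 ler_normr => y_le.
  by apply/orP; right; lra.
- exact: (mu_ok 1 0 ler01 (lexx 0) (addr0 1)).2 (or_intror erefl).
Qed.

Lemma eps_theta_measurement_exact0 eps theta mu :
  eps_theta_measurement eps theta mu -> mu 0 1 [set y | y < -1 + theta] = 1%E.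
Proof.
move=> mu_ok; apply: (@probability_eq1_of_err0 _ theta (0 - 1)).
- exact: measurable_lt.
- move=> y /negP; rewrite -leNgt /err_set /= sub0r ler_normr => y_ge.
  by apply/orP; left; lra.
- exact: (mu_ok 0 1 (lexx 0) ler01 (add0r 1)).2 (or_introl erefl).
Qed.

Definition cautious_reading theta v : R :=
  if v == 1 then 1 else Num.min v (1 - theta).

Lemma cautious_reading_close theta v : 0 < theta -> v <= 1 ->
  `|cautious_reading theta v - v| < theta.
Proof.
move=> theta_gt0 v_le1; rewrite /cautious_reading.
case: eqP => [->|v_ne1]; first by rewrite subrr normr0.
rewrite minEle; case: ifP => [_|/negbT]; first by rewrite subrr normr0.
rewrite -ltNge => v_big.
have v_lt1 : v < 1 by rewrite lt_neqAle v_le1 andbT; apply/eqP.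
by rewrite ltr_norml; apply/andP; split; lra.
Qed.

Lemma cautious_reading_gt theta v : 1 - theta < cautious_reading theta v -> v = 1.
Proof.
by rewrite /cautious_reading; case: eqP => // _; rewrite lt_min ltxx andbF.
Qed.

Lemma dirac_eq1 y S : (\d_y S = 1 :> \bar R)%E -> S y.
Proof.
rewrite diracE; case: (boolP (y \in S)) => [/set_mem //|_] /=.
by move/(congr1 fine) => /= /eqP; rewrite eq_sym oner_eq0.
Qed.

Lemma dirac_eps_theta_measurement eps theta (f : R -> R) : 0 < eps ->
  (forall v, -1 <= v <= 1 -> `|f v - v| < theta) ->
  eps_theta_measurement eps theta (fun p1 p0 => \d_(f (p1 - p0)) : probability R R).
Proof.
move=> eps_gt0 f_close p1 p0 p1_ge0 p0_ge0 p_sum.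
have err0 : \d_(f (p1 - p0)) (err_set theta (p1 - p0)) = 0%E :> \bar R.
  rewrite diracE; case: (boolP (_ \in _)) => //= /set_mem.
  by rewrite /err_set /= leNgt f_close //; apply/andP; split; lra.
by split=> [|_]; [rewrite [X in (X < _)%E]err0 lte_fin | exact: err0].
Qed.

Lemma certain1_of_measurements eps theta p1 p0 : 0 < eps -> 0 < theta ->
  p1 + p0 = 1 ->
  (forall mu, eps_theta_measurement eps theta mu ->
     mu p1 p0 [set y | 1 - theta < y] = 1%E) ->
  p1 = 1.
Proof.
move=> eps_gt0 theta_gt0 p_sum accepts.
suff /dirac_eq1 /cautious_reading_gt : \d_(cautious_reading theta (p1 - p0))
    [set y | 1 - theta < y] = 1%E :> \bar R by lra.
apply: (accepts (fun a b => \d_(cautious_reading theta (a - b)))).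
apply: dirac_eps_theta_measurement => // v /andP[_ v_le1].
exact: cautious_reading_close.
Qed.

Lemma certain0_of_measurements eps theta p1 p0 : 0 < eps -> 0 < theta ->
  p1 + p0 = 1 ->
  (forall mu, eps_theta_measurement eps theta mu ->
     mu p1 p0 [set y | y < -1 + theta] = 1%E) ->
  p0 = 1.
Proof.
move=> eps_gt0 theta_gt0 p_sum rejects.
suff /dirac_eq1 /= reading_lt : \d_(- cautious_reading theta (- (p1 - p0)))
    [set y | y < -1 + theta] = 1%E :> \bar R.
  have : 1 - theta < cautious_reading theta (- (p1 - p0)) by lra.
  by move/cautious_reading_gt; lra.
apply: (rejects (fun a b => \d_(- cautious_reading theta (- (a - b))))).
apply: (@dirac_eps_theta_measurement _ _ (fun v => - cautious_reading theta (- v))).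
  exact: eps_gt0.
move=> v /andP[v_ge1 _].
rewrite -opprD normrN -[X in _ + X]opprK.
by apply: cautious_reading_close => //; lra.
Qed.

End Measurements.

Theorem mainTheorem2 (R : realType) (eps theta : R) :
  0 < eps -> 0 < theta ->
  forall Lang : seq bool -> Prop, EQP R Lang <-> EBQPstar eps theta Lang.
Proof.
move=> eps_gt0 theta_gt0 Lang; split.
- case=> M [k [p [M_unitary decides]]]; exists M, k, p; split=> // x /=.
  have p_le1 := prob_cell_run_le1 M_unitary.1 (peval p (size x)) x k.
  set L := run M _ x in p_le1 *.
  have p1_ge0 := prob_cell_ge0 L k (sym1 M).
  have p0_ge0 := prob_cell_ge0 L k (sym0 M).
  have [accepts rejects] := decides x.
  have [Lx | Lx] := pselect (Lang x).
  + have p1E := accepts Lx; have p0E : prob_cell L k (sym0 M) = 0 by lra.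
    rewrite p1E p0E addr0; split=> // mu mu_ok.
    by split=> [_ | /(_ Lx) []]; exact: eps_theta_measurement_exact1 mu_ok.
  + have p0E := rejects Lx; have p1E : prob_cell L k (sym1 M) = 0 by lra.
    rewrite p1E p0E add0r; split=> // mu mu_ok.
    by split=> [/Lx [] | _]; exact: eps_theta_measurement_exact0 mu_ok.
- case=> M [k [p [M_unitary decides]]]; exists M, k, p; split=> // x.
  have [/= p_sum measures] := decides x.
  split=> Lx.
  + apply: (certain1_of_measurements eps_gt0 theta_gt0 p_sum) => mu mu_ok.
    exact: (measures mu mu_ok).1.
  + apply: (certain0_of_measurements eps_gt0 theta_gt0 p_sum) => mu mu_ok.
    exact: (measures mu mu_ok).2.
Qed.
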